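(* Let $\mathcal L$ be a finite atomic lattice with atoms $A_1,\dots,A_n$ and $\mathcal G$ a building set in $\mathcal L$. The toric variety $X_{\Sigma(\mathcal L,\mathcal G)}$ associated with the fan $\Sigma(\mathcal L,\mathcal G)=\{V(\mathcal S):\mathcal S\text{ nested in }\mathcal G\}$ can be constructed as follows: start from $\mathbb C^n$, the toric variety of the cone spanned by the standard basis of $\mathbb Z^n$, stratified by torus orbits; perform successively the blowups along the torus orbit closures associated with the faces $V(\lfloor G\rfloor)$ of the standard cone, for $G\in\mathcal G$ taken in a linear order $\succ$ such that $G\le G'$ in $\mathcal L$ implies $G'\succeq G$ (i.e. larger elements first); finally remove from the resulting variety all open torus orbits corresponding to cones $V(\mathcal T)$ of the resulting fan whose index set $\mathcal T\subseteq\mathcal G$ is not nested.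
   Context: A lattice is a finite poset in which every subset has a join $\vee$ and a meet; $\hat0$ is its least element; atomic means every element is a join of atoms. For $X\le Y$ write $[X,Y]=\{Z:X\le Z\le Y\}$ and $\mathcal G_{\le X}=\{G\in\mathcal G:G\le X\}$. A subset $\mathcal G\subseteq\mathcal L\setminus\{\hat0\}$ is a building set if for every $X\ne\hat0$, with $\{G_1,\dots,G_k\}$ the maximal elements of $\mathcal G_{\le X}$, there is a poset isomorphism $\prod_{i=1}^k[\hat0,G_i]\to[\hat0,X]$ sending $(\hat0,\dots,G_i,\dots,\hat0)$ to $G_i$. A subset $\mathcal S\subseteq\mathcal G$ is nested if for every set of pairwise incomparable $G_1,\dots,G_t\in\mathcal S$, $t\ge2$, $G_1\vee\dots\vee G_t\notin\mathcal G$. For $X\in\mathcal L$, $\lfloor X\rfloor$ is the set of atoms below $X$, $v_X\in\mathbb R^n$ has $i$-th coordinate $1$ if $A_i\le X$ and $0$ otherwise, and $V(\mathcal S)$ is the cone spanned by $\{v_X:X\in\mathcal S\}$. The blowup along the orbit closure of $V(\lfloor G\rfloor)$ is the toric blowup corresponding to the barycentric stellar subdivision of the fan at that cone, introducing the ray spanned by $v_G$. *)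

From HB Require Import structures.
From mathcomp Require Import all_boot all_order all_algebra.
From mathcomp Require Import finmap.
Set Implicit Arguments. Unset Strict Implicit. Unset Printing Implicit Defensive.
Import Order.TTheory.
Local Open Scope order_scope.
Local Open Scope fset_scope.

(* Lattice-theoretic notions.  A finite lattice is a finTBLatticeType  *)
(* (finite, with \bot = \hat0 and \top).                               *)
Section LatticeDefs.
Context {disp : Order.disp_t} {L : finTBLatticeType disp}.

Definition is_atom (A : L) : bool :=
  (\bot < A) && [forall Y : L, ~~ ((\bot < Y) && (Y < A))].

Definition atoms : {set L} := [set A : L | is_atom A].

Definition floor (X : L) : {set L} := [set A in atoms | A <= X].

Definition atomic : Prop :=
  forall X : L, X = \join_(A in floor X) A.

Definition maxbelow (G : {set L}) (X : L) : {set L} :=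
  [set H in G | (H <= X) && [forall H' in G, ~~ ((H < H') && (H' <= X))]].

(* Product of the intervals [\hat0, G_i], G_i in M, encoded as finite
   functions f with f G_i \in [\hat0, G_i] and f Y = \hat0 for Y \notin M;
   ordered componentwise. *)
Definition prod_elt (M : {set L}) (f : {ffun L -> L}) : bool :=
  [forall Y : L, if Y \in M then f Y <= Y else f Y == \bot].

Definition prod_le (M : {set L}) (f g : {ffun L -> L}) : bool :=
  [forall Y in M, f Y <= g Y].

Definition prod_unit (Gi : L) : {ffun L -> L} :=
  [ffun Y => if Y == Gi then Gi else \bot].

(* poset isomorphism prod_{G_i in M} [\hat0, G_i] -> [\hat0, X] sending
   (\hat0, .., G_i, .., \hat0) to G_i *)
Definition prod_iso (M : {set L}) (X : L) (phi : {ffun L -> L} -> L) : Prop :=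
  [/\ (forall f, prod_elt M f -> phi f <= X),
      (forall f g, prod_elt M f -> prod_elt M g -> phi f = phi g -> f = g),
      (forall Y, Y <= X -> exists2 f, prod_elt M f & phi f = Y),
      (forall f g, prod_elt M f -> prod_elt M g ->
                   prod_le M f g = (phi f <= phi g)) &
      (forall Gi, Gi \in M -> phi (prod_unit Gi) = Gi)].

Definition building_set (G : {set L}) : Prop :=
  \bot \notin G /\
  forall X : L, X != \bot -> exists phi, prod_iso (maxbelow G X) X phi.

Definition nested (G S : {set L}) : bool :=
  (S \subset G) &&
  [forall H : {set L},
     ((H \subset S) && (1 < #|H|)%N &&
      [forall x in H, forall y in H, (x != y) ==> ~~ ((x <= y) || (y <= x))])
     ==> ((\join_(x in H) x) \notin G)].

End LatticeDefs.

(* Simplicial fans in Z^n, each cone recorded by its (finite) set of    *)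
(* generating ray vectors in Z^n.                                       *)
Definition vect (n : nat) := {ffun 'I_n -> int}.
Definition cone (n : nat) := {fset vect n}.
Definition fan (n : nat) := {fset cone n}.

Definition std_basis (n : nat) (i : 'I_n) : vect n :=
  [ffun j => Posz (i == j)].

(* the fan of the standard cone (all its faces): toric variety C^n *)
Definition standard_fan (n : nat) : fan n :=
  fpowerset [fset std_basis i | i in 'I_n].

Definition barycenter (n : nat) (tau : cone n) : vect n :=
  [ffun j => (\sum_(u <- tau) u j)%R].

(* Barycentric stellar subdivision of a simplicial fan F at the cone tau
   (toric blowup along the orbit closure of tau): cones not containing tau
   are kept; every cone sigma containing tau is replaced by the cones
   cone(u_tau, sigma') for the faces sigma' of sigma not containing tau. *)
Definition stellar (n : nat) (F : fan n) (tau : cone n) : fan n :=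
  [fset sigma in F | ~~ (tau `<=` sigma)] `|`
  [fset barycenter tau |` sigma'
     | sigma in [fset s in F | tau `<=` s],
       sigma' in [fset s' in fpowerset sigma | ~~ (tau `<=` s')]].

Section FanOfLattice.
Context {disp : Order.disp_t} {L : finTBLatticeType disp}.

Definition vX (n : nat) (A : 'I_n -> L) (X : L) : vect n :=
  [ffun i => Posz (A i <= X)%O].

Definition Vcone (n : nat) (A : 'I_n -> L) (S : {set L}) : cone n :=
  [fset vX A X | X in S].

Definition nested_fan (n : nat) (A : 'I_n -> L) (G : {set L}) : fan n :=
  [fset Vcone A S | S in [set S : {set L} | nested G S]].

Definition blowup_fan (n : nat) (A : 'I_n -> L) (s : seq L) : fan n :=
  foldl (fun F G => stellar F (Vcone A (floor G))) (standard_fan n) s.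

Definition remove_non_nested (n : nat) (A : 'I_n -> L) (G : {set L})
    (F : fan n) : fan n :=
  [fset sigma in F |
     ~~ [exists T : {set L}, [&& T \subset G, sigma == Vcone A T & ~~ nested G T]]].

End FanOfLattice.

From HB Require Import structures.
From mathcomp Require Import all_boot all_order all_algebra.
From mathcomp Require Import finmap.
Import Order.TTheory.
Local Open Scope order_scope.
Local Open Scope fset_scope.
Set Implicit Arguments. Unset Strict Implicit. Unset Printing Implicit Defensive.

(** Each blowup at [G] inserts the ray [v_G], the barycenter of [V(floor G)],
    so every cone of the blown-up fan is [V(T)] for some [T] contained in the
    building set (which contains the atoms); removing the non-nested ones
    leaves cones of the nested set fan only.
    Conversely, a cone [V(S)] with [S] nested is tracked backwards through the
    blowups. Before the blowups at a final segment [q] of the order it comes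
    from the cone on the members of [S] outside [q] and the atoms below members
    of [S] in [q]. The blowup at the next [G] subdivides that cone by [v_G] if
    [G] is in [S] and keeps it otherwise; both need [floor G] not to be a face
    of the smaller cone. This is where the building-set property enters: an
    element of the building set below the join of members of a nested set lies
    below one of them, and later elements of the order are not above [G]. *)


Lemma index_lt_suffix (T : eqType) (p q : seq T) x y :
  uniq (p ++ x :: q) -> y \in q -> (index x (p ++ x :: q) < index y (p ++ x :: q))%N.
Proof.
rewrite cat_uniq => /and3P [_ /hasPn xq_Np /andP [xNq _]] yq.
have yNp : y \notin p by apply: xq_Np; rewrite in_cons yq orbT.
rewrite !index_cat (negbTE (xq_Np x (mem_head _ _))) (negbTE yNp) /= eqxx addn0.
by case: eqVneq => [xy|_]; [move: xNq; rewrite xy yq | rewrite addnS ltnS leq_addr].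
Qed.

Section Stellar.
Variable n : nat.
Implicit Types (F : fan n) (tau sigma : cone n).

Lemma stellar_keep F tau sigma :
  sigma \in F -> ~~ (tau `<=` sigma) -> sigma \in stellar F tau.
Proof.
move=> sF ntau; rewrite in_fsetU; apply/orP; left.
by apply/imfsetP; exists sigma; rewrite //= inE sF ntau.
Qed.

Lemma stellar_star F tau sigma0 sigma' :
  sigma0 \in F -> tau `<=` sigma0 -> sigma' `<=` sigma0 -> ~~ (tau `<=` sigma') ->
  barycenter tau |` sigma' \in stellar F tau.
Proof.
move=> s0F ts0 s's0 nts'; rewrite in_fsetU; apply/orP; right.
apply/imfset2P; exists sigma0; first by rewrite !inE /= s0F ts0.
by exists sigma'; rewrite //= !inE /= fpowersetE s's0 nts'.
Qed.

Lemma stellar_inv F tau sigma : sigma \in stellar F tau ->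
  sigma \in F \/ exists2 sigma0, sigma0 \in F &
    exists2 sigma', sigma' `<=` sigma0 & sigma = barycenter tau |` sigma'.
Proof.
rewrite in_fsetU => /orP [/imfsetP [x /=]|/imfset2P [x /=]].
  by rewrite inE => /andP [xF _] ->; left.
rewrite !inE => /andP [xF _] [y /=]; rewrite !inE /= => /andP [yx _] ->.
by right; exists x => //; exists y; rewrite -?fpowersetE.
Qed.

End Stellar.

Section FiniteLattice.
Context {disp : Order.disp_t} {L : finTBLatticeType disp}.
Implicit Types (X Y a : L) (C T : {set L}).

Definition antichain T : bool :=
  [forall x in T, forall y in T, (x != y) ==> ~~ ((x <= y) || (y <= x))].

Definition maximal C : {set L} := [set c in C | [forall c' in C, ~~ (c < c')]].

Lemma antichainS T1 T2 : T1 \subset T2 -> antichain T2 -> antichain T1.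
Proof.
move=> /subsetP sT12 /forall_inP aT2; apply/forall_inP => x xT1.
by apply/forall_inP => y yT1; have /forall_inP := aT2 x (sT12 x xT1); apply; apply: sT12.
Qed.

Lemma maximal_sub C : maximal C \subset C.
Proof. by apply/subsetP => c; rewrite inE => /andP []. Qed.

Lemma maximal_above C c : c \in C -> exists2 m, m \in maximal C & c <= m.
Proof.
move=> cC; pose P m := (m \in C) && (c <= m).
have Pc : P c by rewrite /P cC lexx.
have [m /andP [mC cm] m_max] := arg_maxnP (fun m => #|[set z : L | z <= m]|) Pc.
exists m => //; rewrite inE mC; apply/forall_inP => m' m'C; apply/negP => mm'.
have /m_max : P m' by rewrite /P m'C (le_trans cm (ltW mm')).
apply/negP; rewrite -ltnNge; apply/proper_card/properP; split.
  by apply/subsetP => z; rewrite !inE => /le_trans; apply; apply: ltW.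
by exists m'; rewrite !inE ?lexx // lt_geF.
Qed.

Lemma antichain_maximal C : antichain (maximal C).
Proof.
apply/forall_inP => x; rewrite inE => /andP [xC /forall_inP x_max].
apply/forall_inP => y; rewrite inE => /andP [yC /forall_inP y_max].
apply/implyP => xy; apply/negP => /orP [le_xy|le_yx].
  by have := x_max y yC; rewrite lt_neqAle xy le_xy.
by have := y_max x xC; rewrite lt_neqAle eq_sym xy le_yx.
Qed.

Lemma join_maximal C : \join_(c in maximal C) c = \join_(c in C) c.
Proof.
apply/le_anti/andP; split; apply/joinsP => c cC.
  by apply: joins_sup; apply: (subsetP (maximal_sub C)).
by have [m mC cm] := maximal_above cC; apply: joins_min cm.
Qed.

Lemma maxbelowE G X : maxbelow G X = maximal [set H in G | H <= X].
Proof.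
apply/setP => H; rewrite !inE andbA; congr (_ && _).
apply/forall_inP/forall_inP => H_max H'; rewrite ?inE.
  by case/andP=> H'G H'X; have := H_max H' H'G; rewrite H'X andbT.
move=> H'G; apply/negP => /andP [HH' H'X].
by have := H_max H'; rewrite inE H'G H'X HH' => /(_ isT).
Qed.

Lemma atom_neq0 a : is_atom a -> a != \bot.
Proof. by case/andP; rewrite lt0x. Qed.

Lemma atom_le a Y : is_atom a -> Y <= a -> Y = \bot \/ Y = a.
Proof.
case/andP=> _ /forallP /(_ Y) a_min Ya.
have [->|Y0] := eqVneq Y \bot; first by left.
have [->|Ya'] := eqVneq Y a; first by right.
by move: a_min; rewrite lt0x Y0 lt_neqAle Ya' Ya.
Qed.

End FiniteLattice.

Section ProductIso.
Context {disp : Order.disp_t} {L : finTBLatticeType disp}.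
Variables (Ms : {set L}) (X : L) (phi : {ffun L -> L} -> L).
Hypothesis iso : prod_iso Ms X phi.

Lemma prod_unit_elt Gi : Gi \in Ms -> prod_elt Ms (prod_unit Gi).
Proof.
move=> GiM; apply/forallP => Y; rewrite ffunE.
by case: eqP => [->|_]; [rewrite GiM lexx | case: ifP; rewrite ?le0x].
Qed.

Lemma prod_iso_unit_le f Gi :
  Gi \in Ms -> prod_elt Ms f -> (Gi <= phi f) = (Gi <= f Gi).
Proof.
case: iso => _ _ _ iso_le iso_unit GiM Pf.
rewrite -{1}(iso_unit Gi GiM) -iso_le ?prod_unit_elt //.
apply/forall_inP/idP => [/(_ Gi GiM)|GiF Y _]; rewrite ffunE ?eqxx //.
by case: eqP => [->|_]; rewrite ?le0x.
Qed.

Lemma prod_iso_le_unit f Gi Y : Gi \in Ms -> prod_elt Ms f -> phi f <= Gi ->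
  Y \in Ms -> Y != Gi -> f Y = \bot.
Proof.
case: iso => _ _ _ iso_le iso_unit GiM Pf.
rewrite -{1}(iso_unit Gi GiM) -iso_le ?prod_unit_elt // => /forall_inP fGi YM YGi.
by apply/eqP; rewrite -lex0; have := fGi Y YM; rewrite ffunE (negbTE YGi).
Qed.

End ProductIso.

Section BuildingSet.
Context {disp : Order.disp_t} {L : finTBLatticeType disp}.
Variable G : {set L}.
Hypothesis G_building : building_set G.
Implicit Types (X Y M : L) (C S T : {set L}).

Lemma bot_notin_building : \bot \notin G.
Proof. by case: G_building. Qed.

Lemma mem_maxbelow M X : M \in maxbelow G X -> (M \in G) && (M <= X).
Proof. by rewrite maxbelowE !inE => /andP []. Qed.

Lemma exists_maxbelow Y X : Y \in G -> Y <= X ->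
  exists2 M, M \in maxbelow G X & Y <= M.
Proof. by move=> YG YX; rewrite maxbelowE; apply: maximal_above; rewrite inE YG. Qed.

(* Otherwise no element of [G] lies below [a], and the empty product of
   intervals cannot be [[\bot, a]]. *)
Lemma atom_in_building a : is_atom a -> a \in G.
Proof.
move=> ha; have [phi [_ iso_inj iso_onto _ _]] := G_building.2 a (atom_neq0 ha).
have [Ms0|[M]] := set_0Vmem (maxbelow G a).
  have [f Pf f0] := iso_onto \bot (le0x _).
  have [f' Pf' f'a] := iso_onto a (lexx _).
  suff ff' : f = f' by move: (atom_neq0 ha); rewrite -f'a -ff' f0 eqxx.
  apply/ffunP => Y; have := forallP Pf Y; have := forallP Pf' Y.
  by rewrite Ms0 in_set0 => /eqP -> /eqP ->.
move=> /mem_maxbelow /andP [MG /(atom_le ha) [M0|<- //]].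
by move: bot_notin_building; rewrite -M0 MG.
Qed.

(* [M] is a factor of the decomposition of [[\bot, \join T]]; the elements of
   [T] not below [M] have coordinate [\bot] there, so those below [M] generate
   it. *)
Lemma maxbelow_join T M : T \subset G -> M \in maxbelow G (\join_(t in T) t) ->
  M = \join_(t in [set t in T | t <= M]) t.
Proof.
set X := \join_(t in T) t => TG MMs.
have /andP [MG MX] := mem_maxbelow MMs.
have X0 : X != \bot.
  by apply: contraNneq bot_notin_building => X0; move: MX; rewrite X0 lex0 => /eqP <-.
have [phi iso] := G_building.2 X X0; have [_ _ iso_onto iso_le iso_unit] := iso.
set Ms := maxbelow G X in MMs iso iso_onto iso_le iso_unit.
set Z := \join_(t in _) t.
have ZM : Z <= M by apply/joinsP => t; rewrite inE => /andP [].
have [z Pz zZ] := iso_onto Z (le_trans ZM MX).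
pose w := [ffun Y => if Y == M then z Y else if Y \in Ms then Y else \bot].
have Pw : prod_elt Ms w.
  apply/forallP => Y; rewrite ffunE; case: eqVneq => [->|_].
    by have := forallP Pz M; rewrite MMs.
  by case: (Y \in Ms); rewrite ?lexx.
have Xw : X <= phi w.
  apply/joinsP => t tT; have tX : t <= X by apply: joins_sup.
  have [f Pf ft] := iso_onto t tX.
  rewrite -ft -iso_le //; apply/forall_inP => Y YMs; rewrite ffunE.
  case: eqVneq => [->|_]; last by have := forallP Pf Y; rewrite YMs.
  have [tM|tNM] := boolP (t <= M).
    have : phi f <= phi z by rewrite ft zZ; apply: joins_sup; rewrite inE tT tM.
    by rewrite -iso_le // => /forall_inP; apply.
  have [Mt MtMs tMt] := exists_maxbelow (subsetP TG t tT) tX.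
  have MtM : M != Mt by apply: contraNneq tNM => ->.
  by rewrite (prod_iso_le_unit iso MtMs Pf) ?ft ?le0x.
apply/le_anti; rewrite ZM andbT -zZ (prod_iso_unit_le iso MMs Pz).
by have := le_trans MX Xw; rewrite (prod_iso_unit_le iso MMs Pw) /w ffunE eqxx.
Qed.

Lemma nested_join_notin S T : nested G S -> T \subset S -> (1 < #|T|)%N ->
  antichain T -> \join_(t in T) t \notin G.
Proof. by case/andP=> _ /forallP /(_ T) /implyP + TS T1 aT; apply; rewrite TS T1. Qed.

(* Reducing to the maximal elements of [C], which form an antichain, makes
   the nested condition applicable. *)
Lemma nested_le_join S C Y : nested G S -> C \subset S -> Y \in G ->
  Y <= \join_(c in C) c -> exists2 c, c \in C & Y <= c.
Proof.
move=> nS CS YG; rewrite -join_maximal => YX.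
have SG : S \subset G by case/andP: nS.
have TS := subset_trans (maximal_sub C) CS.
have [M MMs YM] := exists_maxbelow YG YX.
have /andP [MG _] := mem_maxbelow MMs.
have eM := maxbelow_join (subset_trans TS SG) MMs.
set TM := [set t in _ | t <= M] in eM.
have TMT : TM \subset maximal C by apply/subsetP => t; rewrite inE => /andP [].
have [TM1|] := ltnP 1 #|TM|.
  have aTM := antichainS TMT (antichain_maximal C).
  by move: MG; rewrite eM (negbTE (nested_join_notin nS (subset_trans TMT TS) TM1 aTM)).
rewrite leq_eqVlt ltnS leqn0 => /orP [/cards1P [t TMt]|/eqP/cards0_eq TM0].
  have /(subsetP TMT) tC : t \in TM by rewrite TMt set11.
  exists t; first exact: (subsetP (maximal_sub C)).
  by rewrite (le_trans YM) // eM TMt big_set1.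
by move: MG; rewrite eM TM0 big_set0 (negbTE bot_notin_building).
Qed.

End BuildingSet.

Section Cones.
Context {disp : Order.disp_t} {L : finTBLatticeType disp}.
Variables (n : nat) (A : 'I_n -> L).
Hypothesis L_atomic : atomic (L := L).
Hypothesis A_inj : injective A.
Hypothesis A_atoms : forall X : L, is_atom X <-> exists i, X = A i.
Implicit Types (X g : L) (T : {set L}).

Lemma atomA i : is_atom (A i).
Proof. by apply/A_atoms; exists i. Qed.

Lemma vX_inj : injective (vX A).
Proof.
move=> X Y eXY; rewrite (L_atomic X) (L_atomic Y).
suff -> : floor X = floor Y by [].
apply/setP => a; rewrite !inE; apply: andb_id2l => /A_atoms [i ->].
have := congr1 (fun f : vect n => f i) eXY; rewrite !ffunE => -[].
by case: (A i <= X); case: (A i <= Y).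
Qed.

Lemma vX_atom i : vX A (A i) = std_basis i.
Proof.
apply/ffunP => j; rewrite !ffunE; congr (Posz (nat_of_bool _)).
have [<-|ij] := eqVneq i j; first exact: lexx.
apply/negbTE/negP => /(atom_le (atomA i)) [Aj0|/A_inj ji].
  by move: (atom_neq0 (atomA j)); rewrite Aj0 eqxx.
by rewrite ji eqxx in ij.
Qed.

Lemma mem_Vcone X T : (vX A X \in Vcone A T) = (X \in T).
Proof. by rewrite mem_imfset //; apply: vX_inj. Qed.

Lemma Vcone_subset T1 T2 : (Vcone A T1 `<=` Vcone A T2) = (T1 \subset T2).
Proof.
apply/fsubsetP/subsetP => sub X.
  by rewrite -!mem_Vcone; apply: sub.
by case/imfsetP => Y /= /sub Y2 ->; rewrite mem_Vcone.
Qed.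

Lemma Vcone_inj : injective (Vcone A).
Proof.
by move=> T1 T2 eT; apply/eqP; rewrite eqEsubset -!Vcone_subset eT fsubset_refl.
Qed.

Lemma VconeU1 X T : Vcone A (X |: T) = vX A X |` Vcone A T.
Proof.
apply/fsetP => v; rewrite in_fset1U; apply/imfsetP/idP => [[Y /=]|].
  by rewrite in_setU1 => /orP [/eqP -> ->|YT ->]; rewrite ?eqxx ?mem_Vcone ?YT ?orbT.
case/orP => [/eqP ->|/imfsetP [Y /= YT ->]]; first by exists X; rewrite ?setU11.
by exists Y; rewrite ?setU1r.
Qed.

Lemma fsubset_Vcone (sigma : cone n) T :
  sigma `<=` Vcone A T -> sigma = Vcone A [set X in T | vX A X \in sigma].
Proof.
move/fsubsetP => sub; apply/fsetP => v; apply/idP/imfsetP => [vs|[X /=]].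
  have /imfsetP [X /= XT eX] := sub v vs.
  by exists X; rewrite // inE XT -eX vs.
by rewrite inE => /andP [_ +] ->.
Qed.

Lemma Vcone_atoms : Vcone A atoms = [fset std_basis i | i in 'I_n].
Proof.
apply/fsetP => v; apply/imfsetP/imfsetP => [[X /=]|[i /= _ ->]].
  by rewrite inE => /A_atoms [i ->] ->; exists i; rewrite ?vX_atom.
by exists (A i); rewrite ?inE ?atomA ?vX_atom.
Qed.

Lemma mem_standard_fan (sigma : cone n) :
  (sigma \in standard_fan n) = (sigma `<=` Vcone A atoms).
Proof. by rewrite /standard_fan -Vcone_atoms fpowersetE. Qed.

Lemma std_basis_floor j g : (std_basis j \in Vcone A (floor g)) = (A j <= g).
Proof. by rewrite -vX_atom mem_Vcone !inE atomA. Qed.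

Lemma barycenter_floor g : barycenter (Vcone A (floor g)) = vX A g.
Proof.
have std_floor u : u \in Vcone A (floor g) -> exists i, u = std_basis i.
  case/imfsetP => a /=; rewrite !inE => /andP [/A_atoms [i ->] _] ->.
  by exists i; rewrite vX_atom.
apply/ffunP => j; rewrite !ffunE.
have other u : u \in Vcone A (floor g) -> u != std_basis j -> u j = 0%R.
  by move=> /std_floor [i ->] ij; rewrite ffunE; case: (i =P j) ij => // ->; rewrite eqxx.
have [jg|jNg] := boolP (A j <= g).
  rewrite (big_fsetD1 (std_basis j)) ?std_basis_floor //= ffunE eqxx.
  by rewrite big1_fset ?GRing.addr0 // => u; rewrite !inE => /andP [uj /other ->].
rewrite big1_fset // => u uV _; rewrite (other u uV) //.
by apply: contraNneq jNg => uj; rewrite -std_basis_floor -uj.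
Qed.

End Cones.

Section Unblown.
Context {disp : Order.disp_t} {L : finTBLatticeType disp}.
Implicit Types (X g : L) (S : {set L}) (q : seq L).

(* [unblown S q] indexes the cone of the partially blown-up fan from which
   [V(S)] arises once the blowups at the members of [q] are performed: the
   elements of [S] still to be blown up are replaced by the atoms below them. *)
Definition unblown S q : {set L} :=
  [set X | ((X \in S) && (X \notin q)) ||
           (is_atom X && [exists H in S, (H \in q) && (X <= H)])].

Lemma unblown_nil S : unblown S [::] = S.
Proof.
apply/setP => X; rewrite !inE andbT orb_idr // => /andP [_ /exists_inP [H _]].
by rewrite in_nil.
Qed.

Lemma unblown_atoms S q : {subset S <= q} -> unblown S q \subset atoms.
Proof.
move=> Sq; apply/subsetP => X; rewrite !inE => /orP [/andP [/Sq ->]|/andP []] //.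
Qed.

Lemma unblown_cons_notin S g q :
  g \notin S -> unblown S (g :: q) = unblown S q.
Proof.
move=> gNS; apply/setP => X; rewrite !inE; congr (_ || (_ && _)).
  by case: eqVneq => [->|]; rewrite ?(negbTE gNS).
apply: eq_existsb => H; rewrite in_cons.
by case: eqVneq => [->|]; rewrite ?(negbTE gNS).
Qed.

Lemma floor_sub_unblown S g q : g \in S -> floor g \subset unblown S (g :: q).
Proof.
move=> gS; apply/subsetP => a; rewrite !inE => /andP [-> ag]; apply/orP; right.
by apply/exists_inP; exists g; rewrite ?mem_head.
Qed.

Lemma unblownD1_sub S g q : unblown S q :\ g \subset unblown S (g :: q).
Proof.
apply/subsetP => X; rewrite !inE => /andP [Xg /orP [/andP [-> Xq]|/andP [-> XH]]].
  by rewrite (negbTE Xg) Xq.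
case/exists_inP: XH => H HS /andP [Hq XH]; apply/orP; right.
by apply/exists_inP; exists H; rewrite // in_cons Hq orbT.
Qed.

End Unblown.

Section Blowup.
Context {disp : Order.disp_t} {L : finTBLatticeType disp}.
Variables (n : nat) (A : 'I_n -> L) (G : {set L}).
Hypothesis L_atomic : atomic (L := L).
Hypothesis A_inj : injective A.
Hypothesis A_atoms : forall X : L, is_atom X <-> exists i, X = A i.
Hypothesis G_building : building_set G.
Implicit Types (X g : L) (S : {set L}) (p q : seq L).

Lemma blowup_fan_rcons p g :
  blowup_fan A (rcons p g) = stellar (blowup_fan A p) (Vcone A (floor g)).
Proof. by rewrite /blowup_fan foldl_rcons. Qed.

Lemma blowup_fan_Vcone p sigma : {subset p <= G} -> sigma \in blowup_fan A p ->
  exists2 T : {set L}, T \subset G & sigma = Vcone A T.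
Proof.
elim/last_ind: p sigma => [|p g IH] sigma /= pG.
  rewrite [_ \in _](mem_standard_fan A_inj A_atoms) => /fsubset_Vcone ->.
  exists [set X in atoms | vX A X \in sigma] => //; apply/subsetP => X.
  by rewrite !inE => /andP [/atom_in_building + _]; apply.
have gG : g \in G by apply: pG; rewrite mem_rcons mem_head.
have pG' : {subset p <= G} by move=> X Xp; apply: pG; rewrite mem_rcons in_cons Xp orbT.
have {}IH tau := IH tau pG'.
rewrite blowup_fan_rcons => /stellar_inv [/IH //|[_ /IH [T0 T0G ->]]].
move=> [sigma' /fsubset_Vcone -> ->].
rewrite (barycenter_floor L_atomic A_inj A_atoms) -VconeU1 //.
exists (g |: [set X in T0 | vX A X \in sigma']) => //.
rewrite subUset sub1set gG (subset_trans _ T0G) //.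
by apply/subsetP => X; rewrite inE => /andP [].
Qed.

Variable S : {set L}.
Hypothesis S_nested : nested G S.

(* An atom below [g] survives in [unblown S q] only below an element of [S]
   not above [g], so [g] would lie below the join of such elements. *)
Lemma floor_notsub_unblown g q : g \in G ->
  (forall H, H \in q -> H \in S -> ~~ (g <= H)) ->
  ~~ (floor g \subset unblown S q :\ g).
Proof.
move=> gG g_max; apply/negP => /subsetP sub.
pose C := [set c in S | ~~ (g <= c)].
have gC : g <= \join_(c in C) c.
  rewrite {1}(L_atomic g); apply/joinsP => a fa; have := sub a fa.
  move: fa; rewrite !inE => /andP [-> ag] /andP [aNg /orP [/andP [aS _]|]].
    apply: joins_sup; rewrite inE aS; apply: contra aNg => ga.
    by apply/eqP/le_anti; rewrite ag ga.
  by case/exists_inP => H HS /andP [Hq aH]; apply: joins_min aH; rewrite inE HS g_max.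
have CS : C \subset S by apply/subsetP => c; rewrite inE => /andP [].
have [c] := nested_le_join G_building S_nested CS gG gC.
by rewrite inE => /andP [_ /negP].
Qed.

Lemma unblown_stellar F g q : g \in G -> g \notin q ->
  (forall H, H \in q -> H \in S -> ~~ (g <= H)) ->
  Vcone A (unblown S (g :: q)) \in F ->
  Vcone A (unblown S q) \in stellar F (Vcone A (floor g)).
Proof.
move=> gG gNq g_max Fg.
have floorN := floor_notsub_unblown gG g_max.
have [gU|gNU] := boolP (g \in unblown S q).
  have gS : g \in S.
    move: gU; rewrite inE gNq andbT => /orP [//|/andP [_ /exists_inP [H HS]]].
    by case/andP=> Hq gH; have := g_max H Hq HS; rewrite gH.
  rewrite -(setD1K gU) VconeU1 // -(barycenter_floor L_atomic A_inj A_atoms).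
  apply: stellar_star Fg _ _ _; rewrite !Vcone_subset //.
  - exact: floor_sub_unblown.
  - exact: unblownD1_sub.
have gNS : g \notin S by apply: contra gNU => gS; rewrite inE gS gNq.
apply: stellar_keep; first by rewrite -(unblown_cons_notin q gNS).
rewrite Vcone_subset //; apply: contra floorN => /subsetP sub; apply/subsetP => a fa.
rewrite in_setD1 sub // andbT; apply: contraNneq gNU => ag.
by rewrite -ag sub.
Qed.

Lemma Vcone_in_blowup_fan s : uniq s -> (forall X, (X \in s) = (X \in G)) ->
  (forall X Y, X \in G -> Y \in G -> X <= Y -> (index Y s <= index X s)%N) ->
  Vcone A S \in blowup_fan A s.
Proof.
move=> s_uniq s_G s_order; have SG : S \subset G by case/andP: S_nested.
suff unblown_in p q : s = p ++ q -> Vcone A (unblown S q) \in blowup_fan A p.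
  by rewrite -(unblown_nil S); apply: unblown_in; rewrite cats0.
elim/last_ind: p q => [|p g IH] q /= es.
  rewrite [_ \in _](mem_standard_fan A_inj A_atoms) Vcone_subset //.
  by apply: unblown_atoms => X XS; rewrite -es s_G (subsetP SG).
rewrite cat_rcons in es; rewrite blowup_fan_rcons.
have gG : g \in G by rewrite -s_G es mem_cat mem_head orbT.
have gNq : g \notin q by move: s_uniq; rewrite es cat_uniq => /and3P [_ _ /andP []].
have g_max H : H \in q -> H \in S -> ~~ (g <= H).
  move=> Hq HS; apply/negP => /(s_order g H gG (subsetP SG H HS)).
  by rewrite leqNgt es (index_lt_suffix _ Hq) // -es.
exact: unblown_stellar gG gNq g_max (IH _ es).
Qed.

End Blowup.

Theorem corollary6p2 (disp : Order.disp_t) (L : finTBLatticeType disp)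
    (n : nat) (A : 'I_n -> L) (G : {set L}) (s : seq L) :
  atomic (L := L) ->
  injective A ->
  (forall X : L, is_atom X <-> exists i, X = A i) ->
  building_set G ->
  uniq s ->
  (forall X : L, (X \in s) = (X \in G)) ->
  (forall X Y : L, X \in G -> Y \in G -> X <= Y -> (index Y s <= index X s)%N) ->
  remove_non_nested A G (blowup_fan A s) = nested_fan A G.
Proof.
move=> L_atomic A_inj A_atoms G_building s_uniq s_G s_order.
apply/fsetP => sigma; rewrite !inE; apply/andP/imfsetP => [[sF NnonT]|[S /=]].
  have sG : {subset s <= G} by move=> X; rewrite s_G.
  have [T TG eT] := blowup_fan_Vcone L_atomic A_inj A_atoms G_building sG sF.
  exists T; rewrite // inE; apply: contraNT NnonT => NT.
  by apply/existsP; exists T; rewrite TG eT eqxx NT.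
rewrite inE => S_nested ->; split.
  exact: (Vcone_in_blowup_fan L_atomic A_inj A_atoms G_building S_nested
            s_uniq s_G s_order).
apply/existsP => -[T /and3P [_ /eqP /(Vcone_inj L_atomic A_atoms) eST]].
by rewrite -eST S_nested.
Qed.
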